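(* Let $s:\mathcal{X}\times\mathcal{Y}\to\mathbb{R}$ be measurable, $S_1,\dots,S_d$ probability distributions on $\mathcal{X}\times\mathcal{Y}$, $f$ a function as described in the context and $\rho>0$. Let $F_1,\dots,F_d$ be the c.d.f.'s of $s\#S_1,\dots,s\#S_d$ and $F_{\min}(x)=\min_{1\le i\le d}F_i(x)$. Let $$\mathcal{P}_{f,\rho}\coloneqq\{S\text{ a distribution on }\mathbb{R}:\exists S_0\in\mathcal{CH}(s\#S_1,\dots,s\#S_d),\ D_f(S\Vert S_0)\le\rho\}$$ and $\widetilde F(t;\mathcal{P}_{f,\rho})\coloneqq\inf_{P\in\mathcal{P}_{f,\rho}}P(S\le t)$. Then for every $t\in\mathbb{R}$, $$\widetilde F(t;\mathcal{P}_{f,\rho})=g_{f,\rho}\left(F_1(t),\dots,F_d(t)\right)=g_{f,\rho}\left(F_{\min}(t)\right).$$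
   Context: $f:\mathbb{R}\to\mathbb{R}\cup\{+\infty\}$ is a closed convex function with $f(1)=0$ and $f(t)=+\infty$ for $t<0$; for $P\ll Q$, $D_f(P\Vert Q)\coloneqq\int f\left(\frac{dP}{dQ}\right)dQ$. $\mathcal{CH}(P_1,\dots,P_d)\coloneqq\{\sum_i\lambda_iP_i:\lambda_i\ge0,\sum_i\lambda_i=1\}$; $s\#T$ is the push-forward $(s\#T)(A)=T(s^{-1}(A))$. With $h(z,\beta)\coloneqq\beta f(z/\beta)+(1-\beta)f((1-z)/(1-\beta))$, define for $\beta_1,\dots,\beta_d\in[0,1]$: $g_{f,\rho}(\beta_1,\dots,\beta_d)\coloneqq\inf\{z\in[0,1]:\inf_{\lambda\ge0,\sum_i\lambda_i=1}h(z,\sum_i\lambda_i\beta_i)\le\rho\}$; for $d=1$, $g_{f,\rho}(\beta)=\inf\{z\in[0,1]:h(z,\beta)\le\rho\}$. *)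

From HB Require Import structures.
From mathcomp Require Import all_boot all_order all_algebra.
From mathcomp Require Import all_classical all_reals all_analysis.
Set Implicit Arguments. Unset Strict Implicit. Unset Printing Implicit Defensive.
Import Order.TTheory GRing.Theory Num.Theory.
Import numFieldNormedType.Exports.
Local Open Scope classical_set_scope.
Local Open Scope ring_scope.
Local Open Scope ereal_scope.

Section defs.
Variable R : realType.

Definition closed_convex_fdiv_gen (f : R -> \bar R) : Prop :=
  [/\ forall x, f x != -oo,
      forall (x y lam : R), (0 <= lam <= 1)%R ->
        f (lam * x + (1 - lam) * y)%R <= lam%:E * f x + (1 - lam)%:E * f y,
      closed [set p : R * R | f p.1 <= p.2%:E],
      f 1%R = 0 &
      forall t, (t < 0)%R -> f t = +oo].

Definition is_density (Q P : set R -> \bar R) (h : R -> R) : Prop :=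
  [/\ measurable_fun setT h, forall x, (0 <= h x)%R &
      forall A, measurable A -> P A = \int[Q]_(x in A) (h x)%:E ].

(* D_f(P || Q) <= rho, where D_f(P||Q) = \int f (dP/dQ) dQ is defined for P << Q *)
Definition fdiv_le (f : R -> \bar R) (P : set R -> \bar R)
    (Q : {measure set R -> \bar R}) (rho : R) : Prop :=
  exists h : R -> R, is_density Q P h /\ \int[Q]_x f (h x) <= rho%:E.

Definition in_CH (d : nat) (mus : 'I_d -> set R -> \bar R) (S0 : set R -> \bar R) : Prop :=
  exists lam : 'I_d -> R, [/\ forall i, (0 <= lam i)%R, (\sum_(i < d) lam i)%R = 1%R &
    forall A, measurable A -> S0 A = \sum_(i < d) (lam i)%:E * mus i A].

(* perspective term  beta f(z / beta), with the convention
   0 f(0/0) = 0 and 0 f(z/0) = +oo for z <> 0 (absolute continuity) *)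
Definition persp (f : R -> \bar R) (z beta : R) : \bar R :=
  if (0 < beta)%R then beta%:E * f (z / beta)%R
  else if z == 0%R then 0 else +oo.

Definition hfun (f : R -> \bar R) (z beta : R) : \bar R :=
  persp f z beta + persp f (1 - z)%R (1 - beta)%R.

Definition simplex (d : nat) : set ('I_d -> R) :=
  [set lam | (forall i, (0 <= lam i)%R) /\ (\sum_(i < d) lam i)%R = 1%R].

Definition gfun (f : R -> \bar R) (rho : R) (d : nat) (beta : 'I_d -> R) : R :=
  inf [set z : R | (0 <= z <= 1)%R /\
        ereal_inf [set hfun f z (\sum_(i < d) lam i * beta i)%R | lam in @simplex d]
          <= rho%:E].

Definition gfun1 (f : R -> \bar R) (rho : R) (beta : R) : R :=
  inf [set z : R | (0 <= z <= 1)%R /\ hfun f z beta <= rho%:E].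

End defs.

From HB Require Import structures.
From mathcomp Require Import all_boot all_order all_algebra.
From mathcomp Require Import all_classical all_reals all_analysis.
From mathcomp Require Import ring lra measurable_realfun.
Set Implicit Arguments. Unset Strict Implicit. Unset Printing Implicit Defensive.
Import Order.TTheory GRing.Theory Num.Theory.
Import numFieldNormedType.Exports.
Local Open Scope classical_set_scope.
Local Open Scope ring_scope.
Local Open Scope ereal_scope.

(* Write A = ]-oo, t]. If P has density k with respect to S0, Jensen's
   inequality in perspective form, S0(B) f(P(B) / S0(B)) <= \int_B f(k) dS0,
   applied to the two cells A and ~A gives h(P(A), S0(A)) <= D_f(P || S0): the
   data-processing inequality for the partition {A, ~A}. Conversely, the density
   equal to z / S0(A) on A and (1 - z) / (1 - S0(A)) off A attains
   D_f(P || S0) = h(z, S0(A)) with P(A) = z. Hence over the f-ball of radius rho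
   around S0 the infimum of P(A) is g_{f,rho}(S0(A)). Since h(z, .) is
   nondecreasing on [z, 1], so is g_{f,rho}, and the worst centre in the convex
   hull is the s#S_i whose c.d.f. is smallest at t. *)

Section extended_reals.
Variable R : realType.
Implicit Types (x y : \bar R) (b : R).

Lemma pmule_neqNy b x : (0 < b)%R -> x != -oo -> b%:E * x != -oo.
Proof. by move=> b0; case: x => [r| |] _ //; rewrite gt0_muley ?lte_fin. Qed.

Lemma adde_def_neqNy x y : x != -oo -> y != -oo -> x +? y.
Proof. by move=> /negbTE hx /negbTE hy; rewrite /adde_def hx hy !andbF. Qed.

End extended_reals.

Section closed_convex_fdiv_gen_theory.
Variable R : realType.
Variable f : R -> \bar R.
Hypothesis hf : closed_convex_fdiv_gen f.

Let f_neqNy x : f x != -oo. Proof. by case: hf. Qed.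
Let f_convex (x y lam : R) : (0 <= lam <= 1)%R ->
  f (lam * x + (1 - lam) * y)%R <= lam%:E * f x + (1 - lam)%:E * f y.
Proof. by case: hf => _ h _ _ _; exact: h. Qed.
Let f1 : f 1%R = 0. Proof. by case: hf. Qed.

Lemma persp_neqNy z b : persp f z b != -oo.
Proof. by rewrite /persp; case: ifP => b0; [exact: pmule_neqNy | case: ifP]. Qed.

Lemma hfun_diag b : (0 <= b <= 1)%R -> hfun f b b = 0.
Proof.
case/andP=> b0 b1; rewrite /hfun /persp.
have [->|bn0] := eqVneq b 0%R.
  by rewrite ltxx /= subr0 ltr01 divr1 f1 mule0 add0e.
rewrite lt0r bn0 b0 divff // f1 mule0 add0e.
case: ltP => b1'; first by rewrite divff ?f1 ?mule0 // gt_eqF.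
have -> : (1 - b = 0)%R by lra.
by rewrite eqxx.
Qed.

Lemma hfun_ge0 z b : (0 <= z <= 1)%R -> (0 <= b <= 1)%R -> 0 <= hfun f z b.
Proof.
case/andP=> z0 z1 /andP[b0 b1]; rewrite /hfun /persp.
have [->|bn0] := eqVneq b 0%R.
  rewrite ltxx subr0 ltr01 divr1 mul1e.
  by have [->|zn0] := eqVneq z 0%R; [rewrite subr0 f1 adde0 | rewrite addye].
have [->|bn1] := eqVneq b 1%R.
  rewrite subrr ltxx ltr01 divr1 mul1e.
  have [z1'|zn1] := eqVneq (1 - z)%R 0%R; last by rewrite addey.
  have -> : z = 1%R by lra.
  by rewrite f1 add0e.
have bp : (0 < b)%R by rewrite lt0r bn0.
have bp1 : (0 < 1 - b)%R by rewrite subr_gt0 lt_neqAle bn1.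
rewrite bp bp1 -f1.
have := f_convex (z / b) ((1 - z) / (1 - b)) (introT andP (conj b0 b1)).
rewrite mulrC divfK ?gt_eqF // [X in (z + X)%R]mulrC divfK ?gt_eqF //.
by rewrite subrKC.
Qed.

(* [x / b] is the convex combination of [1] and [x / c] with weight [th x / b]. *)
Lemma persp_le_mix {x b c th : R} : (0 <= x)%R -> (0 < b)%R -> (0 < c)%R ->
  (0 <= th <= 1)%R -> b = (th * x + (1 - th) * c)%R ->
  b%:E * f (x / b) <= ((1 - th) * c)%:E * f (x / c).
Proof.
move=> x0 b0 c0 /andP[th0 th1] hb.
have bn0 : (th * x + (1 - th) * c)%R != 0%R by rewrite -hb gt_eqF.
pose mu := (th * x / b)%R.
have mu01 : (0 <= mu <= 1)%R.
  apply/andP; split; first by rewrite divr_ge0 // ?mulr_ge0 // ltW.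
  by rewrite ler_pdivrMr // mul1r [leRHS]hb lerDl mulr_ge0 ?subr_ge0 // ltW.
have e : (x / b = mu * 1 + (1 - mu) * (x / c))%R.
  by rewrite /mu hb; field; rewrite bn0 gt_eqF.
have := f_convex 1 (x / c) mu01.
rewrite -e f1 mule0 add0e -(lee_pmul2l (x := b%:E)) ?lte_fin // => /le_trans.
apply; rewrite muleA -EFinM.
suff -> : (b * (1 - mu) = (1 - th) * c)%R by [].
by rewrite /mu hb; field.
Qed.

Lemma hfun_le_mono z b c : (0 <= z)%R -> (z < b)%R -> (b <= c)%R -> (c <= 1)%R ->
  hfun f z b <= hfun f z c.
Proof.
move=> z0 zb bc c1.
have [->|cn1] := eqVneq c 1%R.
  rewrite /hfun [X in _ <= _ + X]/persp subrr ltxx.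
  have -> : ((1 - z == 0) = false)%R by apply/negbTE; rewrite subr_eq0 eq_sym; apply/eqP; lra.
  by rewrite addey ?leey // persp_neqNy.
have bp : (0 < b)%R by lra.
have cp : (0 < c)%R by lra.
have bp1 : (0 < 1 - b)%R by lra.
have cp1 : (0 < 1 - c)%R by lra.
pose th := ((c - b) / (c - z))%R.
have th01 : (0 <= th <= 1)%R.
  by rewrite divr_ge0 ?subr_ge0 //= ?ler_pdivrMr ?mul1r; lra.
have hb : b = (th * z + (1 - th) * c)%R.
  by rewrite /th; field; rewrite subr_eq0; apply/eqP; lra.
have hb' : (1 - b = th * (1 - z) + (1 - th) * (1 - c))%R.
  by rewrite [in LHS]hb; ring.
have z1 : (0 <= 1 - z)%R by lra.
have := leeD (persp_le_mix z0 bp cp th01 hb) (persp_le_mix z1 bp1 cp1 th01 hb').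
have Hc : 0 <= hfun f z c by apply: hfun_ge0; lra.
move: Hc; rewrite /hfun /persp bp cp bp1 cp1 => Hc /le_trans; apply.
rewrite !EFinM -!muleA -muleDr ?adde_def_neqNy ?pmule_neqNy //.
by apply: gee_pMl => //; rewrite lee_fin; lra.
Qed.

Lemma f_le_chord {u v c : R} : (u < c)%R -> (c < v)%R ->
  f c <= ((v - c) / (v - u))%:E * f u + (1 - (v - c) / (v - u))%:E * f v.
Proof.
move=> uc cv.
have vu : (0 < v - u)%R by lra.
have l01 : (0 <= (v - c) / (v - u) <= 1)%R.
  apply/andP; split; first by apply: divr_ge0; lra.
  by rewrite ler_pdivrMr // mul1r; lra.
have := f_convex u v l01.
suff -> : ((v - c) / (v - u) * u + (1 - (v - c) / (v - u)) * v = c)%R by [].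
by field; rewrite gt_eqF.
Qed.

Lemma f_fin_num {x : R} : f x < +oo -> f x \is a fin_num.
Proof. by move=> h; rewrite fin_numE f_neqNy lt_eqF. Qed.

Lemma f_fin_num_between {u v c : R} : (u < c)%R -> (c < v)%R ->
  f u < +oo -> f v < +oo -> f c \is a fin_num.
Proof.
move=> uc cv fu fv; apply: f_fin_num; apply: le_lt_trans (f_le_chord uc cv) _.
have /fineK <- := f_fin_num fu; have /fineK <- := f_fin_num fv.
by rewrite -!EFinM -EFinD ltry.
Qed.

Lemma f_slope_le {u v c : R} : (u < c)%R -> (c < v)%R -> f u < +oo -> f v < +oo ->
  ((fine (f c) - fine (f u)) / (c - u) <= (fine (f v) - fine (f c)) / (v - c))%R.
Proof.
move=> uc cv fu fv.
have := f_le_chord uc cv.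
have /fineK <- := f_fin_num_between uc cv fu fv.
have /fineK <- := f_fin_num fu; have /fineK <- := f_fin_num fv.
rewrite -!EFinM -EFinD lee_fin.
set a := fine (f u); set b := fine (f c); set e := fine (f v) => h.
have vu : (0 < v - u)%R by lra.
have {}h : ((v - u) * b <= (v - c) * a + (c - u) * e)%R.
  rewrite -(ler_pM2l vu) in h; apply: le_trans h _.
  by rewrite le_eqVlt; apply/orP; left; apply/eqP; field; rewrite gt_eqF.
rewrite ler_pdivrMr ?subr_gt0 // mulrAC ler_pdivlMr ?subr_gt0 //=; nra.
Qed.

(* The supremum of the left difference quotients at [c] is a subgradient. *)
Lemma f_subgradient {p q c : R} : (p < c)%R -> (c < q)%R -> f p < +oo -> f q < +oo ->
  exists a : R, forall u, (fine (f c) + a * (u - c))%:E <= f u.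
Proof.
move=> pc cq fp fq.
set fc := fine (f c).
pose L := [set s : R | exists u, [/\ (u < c)%R, f u < +oo &
  s = ((fc - fine (f u)) / (c - u))%R]].
have L_ub : ubound L ((fine (f q) - fc) / (q - c))%R.
  by move=> _ [u [uc fu ->]]; exact: f_slope_le.
have L0 : L !=set0 by exists ((fc - fine (f p)) / (c - p))%R; exists p.
have L_sup : has_sup L by split => //; eexists; exact: L_ub.
exists (sup L) => u.
have [->|/negbTE fuy] := eqVneq (f u) +oo; first exact: leey.
have fu : f u < +oo by rewrite ltey fuy.
rewrite -(fineK (f_fin_num fu)) lee_fin.
have [uc|cu|->] := ltgtP u c; last by rewrite subrr mulr0 addr0.
- have : ((fc - fine (f u)) / (c - u) <= sup L)%R by apply: sup_upper_bound => //; exists u.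
  by rewrite ler_pdivrMr ?subr_gt0 //; nra.
- have : (sup L <= (fine (f u) - fc) / (u - c))%R.
    by apply: ge_sup => // _ [v [vc fv ->]]; exact: f_slope_le.
  by rewrite ler_pdivlMr ?subr_gt0 //; lra.
Qed.

Lemma f_affine_minorant : exists al ga : R, forall u, (al * u + ga)%:E <= f u.
Proof.
have [[p [q [pq fp fq]]]|nofin] :=
  pselect (exists p q, [/\ (p < q)%R, f p < +oo & f q < +oo]).
  have pc : (p < (p + q) / 2)%R by lra.
  have cq : ((p + q) / 2 < q)%R by lra.
  have [a ha] := f_subgradient pc cq fp fq.
  exists a, (fine (f ((p + q) / 2)) - a * ((p + q) / 2))%R => u.
  by apply: le_trans (ha u); rewrite lee_fin le_eqVlt; apply/orP; left; apply/eqP; ring.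
exists 0%R, 0%R => u; rewrite mul0r addr0.
have [->|/negbTE fuy] := eqVneq (f u) +oo; first exact: leey.
have fu : f u < +oo by rewrite ltey fuy.
have f1y : f 1%R < +oo by rewrite f1 ltry.
have [u1|u1|->] := ltgtP u 1%R; last by rewrite f1.
- by exfalso; apply: nofin; exists u, 1%R.
- by exfalso; apply: nofin; exists 1%R, u.
Qed.

(* The sublevel sets [f < r] are intervals. *)
Lemma measurable_f : measurable_fun setT f.
Proof.
apply: (measurability _ (ErealGenInftyO.measurableE R)).
move=> /= _ [_ [r ->] <-]; apply: measurableI => //; apply: is_interval_measurable.
move=> x y /=; rewrite !in_itv /= => hx hy z /andP[xz zy]; rewrite in_itv /=.
have [->|zx] := eqVneq z x; first exact: hx.
have [->|zy'] := eqVneq z y; first exact: hy.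
have xz' : (x < z)%R by rewrite lt_neqAle eq_sym zx.
have zy2 : (z < y)%R by rewrite lt_neqAle zy'.
have fx : f x < +oo by rewrite (lt_trans hx) ?ltry.
have fy : f y < +oo by rewrite (lt_trans hy) ?ltry.
apply: le_lt_trans (f_le_chord xz' zy2) _.
move: hx hy; rewrite -(fineK (f_fin_num fx)) -(fineK (f_fin_num fy)) !lte_fin => hx hy.
have l0 : (0 < (y - z) / (y - x))%R by apply: divr_gt0; lra.
have l1 : (0 < 1 - (y - z) / (y - x))%R by rewrite subr_gt0 ltr_pdivrMr; lra.
nra.
Qed.

End closed_convex_fdiv_gen_theory.

Lemma simplex_sum_bounds {R : realType} {d} {beta : 'I_d -> R} {m : R} {lam} :
  (forall i, m <= beta i <= 1)%R -> simplex lam ->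
  (m <= \sum_(i < d) lam i * beta i <= 1)%R.
Proof.
move=> hb [l0 l1]; apply/andP; split.
  rewrite -[m]mul1r -l1 mulr_suml; apply: ler_sum => i _.
  by rewrite ler_wpM2l //; case/andP: (hb i).
by rewrite -l1; apply: ler_sum => i _; rewrite ler_piMr //; case/andP: (hb i).
Qed.

Lemma simplex_vertex (R : realType) d (i0 : 'I_d) :
  simplex (fun i => (i == i0)%:R : R).
Proof.
split; first by move=> i; rewrite ler0n.
by rewrite (bigD1 i0) //= eqxx big1 ?addr0 // => i /negbTE ->.
Qed.

Section gfun_theory.
Variable R : realType.
Variable f : R -> \bar R.
Hypothesis hf : closed_convex_fdiv_gen f.
Variable rho : R.
Hypothesis rho0 : (0 <= rho)%R.

Let Z b := [set z : R | (0 <= z <= 1)%R /\ hfun f z b <= rho%:E].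

Let Z_lbound b : has_lbound (Z b).
Proof. by exists 0%R => z [/andP[]]. Qed.

Let Z_diag b : (0 <= b <= 1)%R -> Z b b.
Proof. by move=> hb; split => //; rewrite hfun_diag // lee_fin. Qed.

Lemma gfun1_le m z : (0 <= m <= 1)%R -> (0 <= z <= 1)%R ->
  ((z < m)%R -> hfun f z m <= rho%:E) -> (gfun1 f rho m <= z)%R.
Proof.
move=> m01 z01 hz.
have [mz|zm] := leP m z; last by apply: ge_inf; [exact: Z_lbound | split => //; exact: hz].
by apply: le_trans mz; apply: ge_inf; [exact: Z_lbound | exact: Z_diag].
Qed.

Lemma gfun1_le_hfun m c z : (0 <= m)%R -> (m <= c)%R -> (c <= 1)%R ->
  (0 <= z <= 1)%R -> hfun f z c <= rho%:E -> (gfun1 f rho m <= z)%R.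
Proof.
move=> m0 mc c1 /andP[z0 z1] hz; apply: gfun1_le; rewrite ?z0 ?z1 ?m0 //=.
  exact: le_trans c1.
by move=> zm; apply: le_trans hz; apply: hfun_le_mono.
Qed.

(* As [hfun f z] is nondecreasing on [[z, 1]], the infimum over the simplex is
   attained at the vertex of a minimal coordinate. *)
Lemma gfun_min d (beta : 'I_d -> R) (i0 : 'I_d) :
  (forall i, beta i0 <= beta i <= 1)%R -> (0 <= beta i0)%R ->
  gfun f rho beta = gfun1 f rho (beta i0).
Proof.
set m := beta i0 => hb m0.
have m01 : (0 <= m <= 1)%R by rewrite m0; case/andP: (hb i0).
pose Zf := [set z : R | (0 <= z <= 1)%R /\
  ereal_inf [set hfun f z (\sum_(i < d) lam i * beta i)%R | lam in @simplex R d] <= rho%:E].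
change (inf Zf = gfun1 f rho m).
have Zf_lbound : has_lbound Zf by exists 0%R => z [/andP[]].
have Z_Zf : Z m `<=` Zf.
  move=> z [z01 hz]; split => //; apply: le_trans hz; apply: ge_ereal_inf.
  exists (hfun f z m) => //.
  exists (fun i => (i == i0)%:R); first exact: simplex_vertex.
  congr hfun; rewrite (bigD1 i0) //= eqxx mul1r big1 ?addr0 // => i /negbTE ->.
  by rewrite mul0r.
apply/eqP; rewrite eq_le; apply/andP; split.
  apply: lb_le_inf; first by exists m; exact: Z_diag.
  by move=> z /Z_Zf; exact: ge_inf.
apply: lb_le_inf; first by exists m; apply: Z_Zf; exact: Z_diag.
move=> z [z01 hz]; apply: gfun1_le => // zm; apply: le_trans hz.
apply/ereal_infP => _ [lam hlam <-].
have /andP[m_le le1] := simplex_sum_bounds hb hlam.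
by case/andP: z01 => z0 _; apply: hfun_le_mono.
Qed.

End gfun_theory.

Section integral_lemmas.
Context d (T : measurableType d) (R : realType) (mu : {measure set T -> \bar R}).
Variables (D : set T) (mD : measurable D).

Lemma le_integral_integrable_lb (l g : T -> \bar R) : mu.-integrable D l ->
  measurable_fun D g -> (forall x, D x -> l x <= g x) ->
  \int[mu]_(x in D) l x <= \int[mu]_(x in D) g x.
Proof.
move=> il mg lg; rewrite integralE [leRHS]integralE.
have ml : measurable_fun D l by case/integrableP: il.
apply: leeB; apply: ge0_le_integral => //.
- exact: measurable_funepos.
- exact: measurable_funepos.
- by move=> x /mem_set; apply: funepos_le => y /set_mem /lg.
- exact: measurable_funeneg.
- exact: measurable_funeneg.
- by move=> x /mem_set; apply: funeneg_le => y /set_mem /lg.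
Qed.

Lemma integrable_lb_integral_lty (l g : T -> \bar R) : mu.-integrable D l ->
  measurable_fun D g -> (forall x, D x -> l x <= g x) ->
  \int[mu]_(x in D) g x < +oo -> mu.-integrable D g.
Proof.
move=> il mg lg gy; apply/integrableP; split => //.
have ml : measurable_fun D l by case/integrableP: il.
have gneg : \int[mu]_(x in D) g^\- x < +oo.
  apply: le_lt_trans (integral_funeneg_lt_pinfty mD il).
  apply: ge0_le_integral => //; [exact: measurable_funeneg | exact: measurable_funeneg |].
  by move=> x /mem_set; apply: funeneg_le => y /set_mem /lg.
have gpos : \int[mu]_(x in D) g^\+ x < +oo.
  have gneg_fin : \int[mu]_(x in D) g^\- x \is a fin_num.
    by rewrite ge0_fin_numE // integral_ge0.
  by move: gy; rewrite integralE lteBlDr // => /lt_le_trans; apply; exact: leey.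
rewrite (eq_integral (fun x => g^\+ x + g^\- x)); last first.
  by move=> x _; rewrite -[RHS]/((g^\+ \+ g^\-) x) -fune_abse.
rewrite ge0_integralD //; first exact: lte_add_pinfty.
- exact: measurable_funepos.
- exact: measurable_funeneg.
Qed.

Lemma integral_ge0_eq0_ae (h : T -> \bar R) : measurable_fun D h ->
  {ae mu, forall x, D x -> 0 <= h x} -> \int[mu]_(x in D) h x = 0 ->
  {ae mu, forall x, D x -> h x = 0}.
Proof.
move=> mh h0 ih.
have : \int[mu]_(x in D) `|h x| = 0.
  rewrite -ih; apply: ae_eq_integral => //; first exact: measurableT_comp.
  by apply: filterS h0 => x hx Dx; rewrite gee0_abs // hx.
by move/(ae_eq_integral_abs mu mD mh).
Qed.

End integral_lemmas.

Section jensen_perspective.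
Context d (T : measurableType d) (R : realType) (mu : {finite_measure set T -> \bar R}).
Variables (B : set T) (mB : measurable B) (k : T -> R).
Hypotheses (mk : measurable_fun setT k) (ik : mu.-integrable B (EFin \o k)).
Variables (b y : R).
Hypotheses (muB : mu B = b%:E) (intk : \int[mu]_(x in B) (k x)%:E = y%:E).

Lemma integral_affine (a0 a1 : R) :
  mu.-integrable B (fun x => (a0 + a1 * k x)%:E) /\
  \int[mu]_(x in B) (a0 + a1 * k x)%:E = (a0 * b + a1 * y)%:E.
Proof.
have i0 := finite_measure_integrable_cst mu a0 mB.
have i1 := integrableZl mB a1 ik.
have e : {in B, (EFin \o cst a0) \+ (fun x => a1%:E * (EFin \o k) x) =1
                (fun x => (a0 + a1 * k x)%:E)}.
  by move=> x _ /=; rewrite EFinD EFinM.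
split; first exact: eq_integrable mB _ _ e (integrableD mB i0 i1).
rewrite -(eq_integral _ _ e) integralD // integralZl //.
rewrite (_ : \int[mu]_(x in B) (EFin \o cst a0) x = a0%:E * mu B); last first.
  by rewrite -integral_cst //; apply: eq_integral.
by rewrite muB intk -!EFinM -EFinD mulrC.
Qed.

Variable f : R -> \bar R.
Hypothesis hf : closed_convex_fdiv_gen f.
Hypothesis b0 : (0 < b)%R.

Let mfk : measurable_fun B (fun x => f (k x)).
Proof. by apply: measurable_funS (measurableT_comp (measurable_f hf) mk) => //. Qed.

Let c := (y / b)%R.

Let ae_eq_mean (s : R) : s != 0%R ->
  {ae mu, forall x, B x -> (0 <= s * (c - k x))%R} -> {ae mu, forall x, B x -> k x = c}.
Proof.
move=> s0 hs.
have e x : (s * c + - s * k x = s * (c - k x))%R by ring.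
have [ia int0] := integral_affine (s * c) (- s).
have {}int0 : \int[mu]_(x in B) (s * c + - s * k x)%:E = 0.
  by rewrite int0 /c; congr EFin; field; rewrite gt_eqF.
have h0 : {ae mu, forall x, B x -> 0 <= (s * c + - s * k x)%:E}.
  by apply: filterS hs => x h Bx; rewrite lee_fin e h.
have := integral_ge0_eq0_ae mB (measurable_int mu ia) h0 int0.
apply: filterS => x h Bx; move: (h Bx) => /eqP.
by rewrite eqe e mulf_eq0 (negbTE s0) subr_eq0 => /eqP ->.
Qed.

(* [f] is infinite on one side of the mean [c], so [k] lies a.e. on the other
   side, hence is a.e. equal to [c]. *)
Let jensen_persp_one_sided :
  (forall q, (c < q)%R -> f q = +oo) \/ (forall p, (p < c)%R -> f p = +oo) ->
  b%:E * f c <= \int[mu]_(x in B) f (k x).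
Proof.
move=> f_side.
have [->|/negbTE fky] := eqVneq (\int[mu]_(x in B) f (k x)) +oo; first exact: leey.
have [al [ga f_ge]] := f_affine_minorant hf.
have [ia _] := integral_affine ga al.
have ifk : mu.-integrable B (fun x => f (k x)).
  apply: (integrable_lb_integral_lty mB ia mfk); last by rewrite ltey fky.
  by move=> x _; rewrite addrC.
have fk_fin := integrable_ae mB ifk.
have k_c : {ae mu, forall x, B x -> k x = c}.
  case: f_side => f_side.
  - apply: (@ae_eq_mean 1 (oner_neq0 _)); apply: filterS fk_fin => x fk Bx.
    rewrite mul1r subr_ge0 leNgt; apply/negP => /f_side fky'.
    by move: (fk Bx); rewrite fky'.
  - apply: (@ae_eq_mean (-1)); first by rewrite oppr_eq0 oner_eq0.
    apply: filterS fk_fin => x fk Bx.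
    rewrite mulN1r oppr_ge0 subr_le0 leNgt; apply/negP => /f_side fky'.
    by move: (fk Bx); rewrite fky'.
rewrite (ae_eq_integral (cst (f c))) //; last by apply: filterS k_c => x h Bx; rewrite /= h.
rewrite integral_cst // muleC.
by have -> : f c * mu B = f c * b%:E by congr (_ * _); exact: muB.
Qed.

Lemma jensen_persp : b%:E * f (y / b) <= \int[mu]_(x in B) f (k x).
Proof.
have [[p [q [pc cq fp fq]]]|nofin] :=
  pselect (exists p q, [/\ (p < c)%R, (c < q)%R, f p < +oo & f q < +oo]); last first.
  apply: jensen_persp_one_sided.
  have [[q [cq fq]]|noq] := pselect (exists q, (c < q)%R /\ f q < +oo).
    right => p pc; apply/eqP; apply: contrapT => /negP fp.
    by apply: nofin; exists p, q; split => //; rewrite ltey.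
  left => q cq; apply/eqP; apply: contrapT => /negP fq.
  by apply: noq; exists q; rewrite ltey.
have fc_fin := f_fin_num_between hf pc cq fp fq.
have [a f_ge] := f_subgradient hf pc cq fp fq.
have [ia int_aff] := integral_affine (fine (f c) - a * c) a.
have f_ge' x : B x -> (fine (f c) - a * c + a * k x)%:E <= f (k x).
  by move=> _; apply: le_trans (f_ge (k x)); rewrite lee_fin; lra.
apply: le_trans (le_integral_integrable_lb mB ia mfk f_ge'); rewrite int_aff.
rewrite -(fineK fc_fin) -EFinM lee_fin /= le_eqVlt; apply/orP; left; apply/eqP.
by rewrite /c; field; rewrite gt_eqF.
Qed.

End jensen_perspective.

Section data_processing.
Variables (R : realType) (f : R -> \bar R).
Hypothesis hf : closed_convex_fdiv_gen f.
Variables (S0 P : probability R R) (k : R -> R).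
Hypothesis hk : is_density S0 P k.

Let mk : measurable_fun setT k. Proof. by case: hk. Qed.
Let k_ge0 x : (0 <= k x)%R. Proof. by case: hk. Qed.
Let Pk D : measurable D -> P D = \int[S0]_(x in D) (k x)%:E.
Proof. by case: hk => _ _; apply. Qed.

Let mkE : measurable_fun setT (EFin \o k). Proof. exact/measurable_EFinP. Qed.

Let integrable_k D : measurable D -> S0.-integrable D (EFin \o k).
Proof.
move=> mD; apply/integrableP; split; first exact: measurable_funS mkE.
under eq_integral do rewrite gee0_abs ?lee_fin //.
by rewrite -Pk // (le_lt_trans (probability_le1 P mD)) ?ltry.
Qed.

Let int_k D : measurable D -> \int[S0]_(x in D) (k x)%:E = (fine (P D))%:E.
Proof. by move=> mD; rewrite -Pk // fineK // fin_num_measure. Qed.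

Let P_abscont D : measurable D -> S0 D = 0 -> P D = 0.
Proof. by move=> mD S0D; rewrite Pk // null_set_integral //; exact: measurable_funS mkE. Qed.

Lemma fdiv_density_ge0 : 0 <= \int[S0]_x f (k x).
Proof.
have := jensen_persp measurableT mk (integrable_k measurableT) (probability_setT S0)
  (int_k measurableT) hf ltr01.
by rewrite probability_setT /= divr1 mul1e; case: hf => _ _ _ ->.
Qed.

Lemma hfun_le_fdiv A : measurable A ->
  hfun f (fine (P A)) (fine (S0 A)) <= \int[S0]_x f (k x).
Proof.
move=> mA; have mAc : measurable (~` A) := measurableC mA.
set b := fine (S0 A); set z := fine (P A).
have S0A : S0 A = b%:E by rewrite /b fineK // fin_num_measure.
have PA : P A = z%:E by rewrite /z fineK // fin_num_measure.
have S0Ac : S0 (~` A) = (1 - b)%:E by rewrite probability_setC // EFinB -S0A.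
have PAc : P (~` A) = (1 - z)%:E by rewrite probability_setC // EFinB -PA.
have b01 : (0 <= b <= 1)%R by rewrite -!lee_fin -S0A measure_ge0 probability_le1.
have [b0|bn0] := eqVneq b 0%R.
  have /eqP : P A = 0 by apply: P_abscont => //; rewrite S0A b0.
  rewrite PA eqe b0 => /eqP ->; rewrite hfun_diag ?lexx ?ler01 //.
  exact: fdiv_density_ge0.
have [b1|bn1] := eqVneq b 1%R.
  have /eqP : P (~` A) = 0 by apply: P_abscont => //; rewrite S0Ac b1 subrr.
  rewrite PAc eqe subr_eq0 b1 => /eqP <-; rewrite hfun_diag ?lexx ?ler01 //.
  exact: fdiv_density_ge0.
have bp : (0 < b)%R by rewrite lt0r bn0; case/andP: b01.
have bp1 : (0 < 1 - b)%R by rewrite subr_gt0 lt_neqAle bn1; case/andP: b01.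
have jA := jensen_persp mA mk (integrable_k mA) S0A (int_k mA) hf bp.
have int_kAc : \int[S0]_(x in ~` A) (k x)%:E = (1 - z)%:E by rewrite int_k // PAc.
have jAc := jensen_persp mAc mk (integrable_k mAc) S0Ac int_kAc hf bp1.
rewrite /hfun /persp bp bp1; apply: le_trans (leeD jA jAc) _.
rewrite -integral_setU ?setUv //; last by rewrite disj_set2E setICr.
exact: measurable_funS (measurableT_comp (measurable_f hf) mk).
Qed.

End data_processing.

Lemma mnormalize_mass1 d (T : measurableType d) (R : realType)
    (mu : {measure set T -> \bar R}) (P : probability T R) :
  mu setT = 1 -> mnormalize mu P = mu :> (set T -> \bar R).
Proof.
by move=> mu1; apply/funext => A; rewrite /mnormalize mu1 onee_eq0 /= invr1 mule1.
Qed.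

Lemma integral_two_valued d (T : measurableType d) (R : realType)
    (mu : {measure set T -> \bar R}) (A B : set T) (g : T -> \bar R) (u v : \bar R) :
  measurable A -> measurable B -> measurable_fun setT g ->
  (forall x, A x -> g x = u) -> (forall x, ~ A x -> g x = v) ->
  \int[mu]_(x in B) g x = u * mu (B `&` A) + v * mu (B `&` ~` A).
Proof.
move=> mA mB mg gu gv.
have mAc : measurable (~` A) := measurableC mA.
rewrite -[in LHS](setIT B) -(setUv A) setIUr integral_setU //; last 4 first.
- exact: measurableI.
- exact: measurableI.
- exact: measurable_funS mg.
- by rewrite disj_set2E -setIIr setICr setI0.
rewrite (eq_integral (cst u)); last by move=> x /set_mem [_ /gu].
rewrite [X in _ + X](eq_integral (cst v)); last by move=> x /set_mem [_ /gv].
by rewrite !integral_cst //; apply: measurableI.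
Qed.

Section two_level_density.
Variables (R : realType) (f : R -> \bar R).
Hypothesis hf : closed_convex_fdiv_gen f.
Variables (S0 : probability R R) (A : set R) (z : R).
Hypotheses (mA : measurable A) (z01 : (0 <= z <= 1)%R).
Let b := fine (S0 A).
Hypothesis b01 : (0 < b < 1)%R.

Let mAc : measurable (~` A) := measurableC mA.
Let S0A : S0 A = b%:E. Proof. by rewrite /b fineK // fin_num_measure. Qed.
Let S0Ac : S0 (~` A) = (1 - b)%:E. Proof. by rewrite probability_setC // EFinB -S0A. Qed.
Let bp : (0 < b)%R. Proof. by case/andP: b01. Qed.
Let bp1 : (0 < 1 - b)%R. Proof. by rewrite subr_gt0; case/andP: b01. Qed.

Let a := (z / b)%R.
Let c := ((1 - z) / (1 - b))%R.
Let a0 : (0 <= a)%R.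
Proof. by apply: divr_ge0; [case/andP: z01 | exact: ltW]. Qed.
Let c0 : (0 <= c)%R.
Proof. by apply: divr_ge0; [rewrite subr_ge0; case/andP: z01 | exact: ltW]. Qed.

Let mix := measure_add (mscale (NngNum a0) (mrestr S0 mA))
                       (mscale (NngNum c0) (mrestr S0 mAc)).

Let mixE B : mix B = a%:E * S0 (B `&` A) + c%:E * S0 (B `&` ~` A).
Proof. by rewrite /mix measure_addE. Qed.

Let mix1 : mix setT = 1.
Proof.
rewrite mixE !setTI S0A S0Ac -!EFinM -EFinD; congr EFin.
by rewrite /a /c; field; rewrite !gt_eqF.
Qed.

Lemma two_level_density : exists (P : probability R R) (k : R -> R),
  [/\ is_density S0 P k, \int[S0]_x f (k x) = hfun f z b & P A = z%:E].
Proof.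
(* [mix] has total mass 1: normalizing it only equips it with a probability structure. *)
pose P : probability R R := mnormalize mix S0.
have PE B : P B = mix B by rewrite /P /= (mnormalize_mass1 _ mix1).
pose k x := (a * \1_A x + c * \1_(~` A) x)%R.
have kA x : A x -> k x = a.
  by move=> Ax; rewrite /k !indicE mem_set // memNset // mulr1 mulr0 addr0.
have kAc x : ~ A x -> k x = c.
  by move=> nAx; rewrite /k !indicE memNset // mem_set // mulr1 mulr0 add0r.
have mk : measurable_fun setT k by apply: measurable_funD; apply: measurable_funM.
exists P, k; split.
- split => // [x|B mB]; first by rewrite addr_ge0 // mulr_ge0 // indicE ler0n.
  rewrite PE mixE (@integral_two_valued _ _ _ S0 A B (EFin \o k) a%:E c%:E) //.
  + exact/measurable_EFinP.
  + by move=> x /kA /= ->.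
  + by move=> x /kAc /= ->.
- rewrite (@integral_two_valued _ _ _ S0 A setT (fun x => f (k x)) (f a) (f c)) //.
  + rewrite !setTI muleC [X in _ + X]muleC /hfun /persp bp bp1.
    by congr (_ * _ + _ * _); [exact: S0A | exact: S0Ac].
  + exact: measurableT_comp (measurable_f hf) mk.
  + by move=> x /kA ->.
  + by move=> x /kAc ->.
- rewrite PE mixE setIid setICr measure0 mule0 adde0 S0A -EFinM.
  by rewrite /a divfK ?gt_eqF.
Qed.

End two_level_density.

Lemma ereal_inf_eq_inf (R : realType) (E : set (\bar R)) (Z : set R) :
  has_lbound Z -> Z !=set0 ->
  (forall e, E e -> (inf Z)%:E <= e) ->
  (forall z, Z z -> exists2 e, E e & e <= z%:E) ->
  ereal_inf E = (inf Z)%:E.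
Proof.
move=> Zlb Z0 lbE ubE; apply/eqP; rewrite eq_le; apply/andP; split; last exact/ereal_infP.
by rewrite -ereal_inf_EFin //; apply/ereal_infP => _ [z /ubE Zz <-]; exact: ge_ereal_inf.
Qed.

Lemma in_CH_vertex (R : realType) d (mus : 'I_d -> set R -> \bar R) (i0 : 'I_d) :
  in_CH mus (mus i0).
Proof.
have [l0 l1] := simplex_vertex R i0.
exists (fun i => (i == i0)%:R); split => // B mB.
rewrite (bigD1 i0) //= eqxx mul1e big1 ?adde0 // => i /negbTE ->.
by rewrite mul0e.
Qed.

Section fdiv_ball.
Variables (R : realType) (f : R -> \bar R).
Hypothesis hf : closed_convex_fdiv_gen f.
Variable rho : R.
Hypothesis rho0 : (0 <= rho)%R.

Lemma fdiv_le_refl (S0 : probability R R) : fdiv_le f S0 S0 rho.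
Proof.
exists (cst 1%R); split.
  split => // B mB; rewrite (eq_integral (cst 1%:E)) //.
  by rewrite integral_cst // mul1e.
by rewrite integral0_eq ?lee_fin // => x _ /=; case: hf => _ _ _ ->.
Qed.

Lemma fdiv_ball_attains (S0 : probability R R) (A : set R) (z : R) :
  measurable A -> (0 <= z <= 1)%R -> hfun f z (fine (S0 A)) <= rho%:E ->
  exists P : probability R R, fdiv_le f P S0 rho /\ P A <= z%:E.
Proof.
move=> mA z01 hz; set b := fine (S0 A) in hz.
have S0A : S0 A = b%:E by rewrite /b fineK // fin_num_measure.
have [b0|bn0] := eqVneq b 0%R.
  by exists S0; split; [exact: fdiv_le_refl | rewrite S0A b0 lee_fin; case/andP: z01].
have [b1|bn1] := eqVneq b 1%R.
  exists S0; split; first exact: fdiv_le_refl.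
  rewrite S0A b1 lee_fin; apply: contraTT hz; rewrite -!ltNge => z1.
  rewrite /hfun [X in _ + X]/persp b1 subrr ltxx subr_eq0 eq_sym lt_eqF //.
  by rewrite addey ?ltry // persp_neqNy.
have b01 : (0 < b < 1)%R.
  have : (0 <= b <= 1)%R by rewrite -!lee_fin -S0A measure_ge0 probability_le1.
  by case/andP => ? ?; rewrite !lt_neqAle eq_sym bn0 bn1 /=; apply/andP.
have [P [k [Pk fk PA]]] := two_level_density hf mA z01 b01.
by exists P; split; [exists k; rewrite fk | rewrite PA].
Qed.

End fdiv_ball.

Section robust_cdf.
Variables (R : realType) (f : R -> \bar R).
Hypothesis hf : closed_convex_fdiv_gen f.
Variable rho : R.
Hypothesis rho0 : (0 <= rho)%R.
Variables (d : nat) (mus : 'I_d -> probability R R) (A : set R) (i0 : 'I_d).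
Hypothesis mA : measurable A.
Hypothesis i0_min : forall i, (fine (mus i0 A) <= fine (mus i A))%R.

Let prob_fine01 (P : probability R R) : (0 <= fine (P A) <= 1)%R.
Proof. by rewrite -!lee_fin fineK ?fin_num_measure // measure_ge0 probability_le1. Qed.

Lemma ereal_inf_fdiv_ball :
  ereal_inf [set P A | P in [set P : probability R R | exists S0 : probability R R,
                                in_CH mus S0 /\ fdiv_le f P S0 rho]] =
  (gfun1 f rho (fine (mus i0 A)))%:E.
Proof.
set m := fine (mus i0 A).
have m_le i : (m <= fine (mus i A) <= 1)%R by rewrite i0_min; case/andP: (prob_fine01 (mus i)).
have m01 : (0 <= m <= 1)%R := prob_fine01 (mus i0).
rewrite /gfun1; apply: ereal_inf_eq_inf.
- by exists 0%R => z [/andP[]].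
- by exists m; split => //; rewrite hfun_diag // lee_fin.
- move=> _ [P [S0 [[lam [l0 l1 S0E]] [k [Pk fk]]]] <-].
  have S0A : fine (S0 A) = (\sum_(i < d) lam i * fine (mus i A))%R.
    rewrite S0E // (eq_bigr (fun i => (lam i * fine (mus i A))%:E)) ?sumEFin //.
    by move=> i _; rewrite EFinM fineK // fin_num_measure.
  have /andP[c_ge c_le] := simplex_sum_bounds m_le (conj l0 l1).
  rewrite -(fineK (fin_num_measure P A mA)) lee_fin.
  apply: (gfun1_le_hfun hf rho0 _ c_ge c_le (prob_fine01 P)); first by case/andP: m01.
  by rewrite -S0A; apply: le_trans fk; exact: hfun_le_fdiv.
- move=> z [z01 hz]; have [P [PS0 PA]] := fdiv_ball_attains hf rho0 mA z01 hz.
  by exists (P A) => //; exists P => //; exists (mus i0); split => //; exact: in_CH_vertex.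
Qed.

End robust_cdf.

Theorem lemma18 (R : realType) (dX dY : measure_display)
  (X : measurableType dX) (Y : measurableType dY)
  (s : (X * Y)%type -> R) (hs : measurable_fun setT s)
  (d : nat) (hd : (0 < d)%N) (S : 'I_d -> probability (X * Y)%type R)
  (f : R -> \bar R) (hf : closed_convex_fdiv_gen f)
  (rho : R) (hrho : (0 < rho)%R) :
  let F := fun (i : 'I_d) (x : R) => fine (S i (s @^-1` `]-oo, x]%classic)) in
  let Fmin := fun x : R => \big[Order.min/1%R]_(i < d) F i x in
  let Pfrho := [set P : probability R R | exists S0 : probability R R,
        in_CH (fun i A => S i (s @^-1` A)) S0 /\ fdiv_le f P S0 rho] in
  forall t : R,
    ereal_inf [set P `]-oo, t]%classic | P in Pfrho] = (gfun f rho (fun i => F i t))%:E /\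
    gfun f rho (fun i => F i t) = gfun1 f rho (Fmin t).
Proof.
move=> F Fmin Pfrho t.
have mA : measurable `]-oo, t]%classic by exact: measurable_itv.
have msA : measurable (s @^-1` `]-oo, t]%classic).
  by rewrite -[X in measurable X]setTI; exact: hs.
pose mus i := distribution (S i) (mfun_Sub (mem_set hs)).
have F01 i : (0 <= F i t <= 1)%R.
  by rewrite /F -!lee_fin fineK ?fin_num_measure // measure_ge0 probability_le1.
have [i0 _ Fmin_i0] := @eq_bigmin _ _ _ (1%R : R) (Ordinal hd) xpredT (fun i => F i t) isT
  (fun i _ => proj2 (andP (F01 i))).
have F_i0_le i : (F i0 t <= F i t <= 1)%R.
  by rewrite -Fmin_i0 bigmin_le ?orbT //; case/andP: (F01 i).
have gE := gfun_min hf (ltW hrho) F_i0_le (proj1 (andP (F01 i0))).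
split; last by rewrite gE /Fmin Fmin_i0.
rewrite gE; apply: (@ereal_inf_fdiv_ball _ _ hf _ (ltW hrho) _ mus) => // i.
by case/andP: (F_i0_le i).
Qed.
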